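(* Let $(H,L_H)$ be a right-resolving labeled graph presenting $Y=L_H(X_H)$, and let $C$ be a component of $H''$ such that $\beta_H(y)$ is backward asymptotic to $X_C$ for some $y\in Y$. Then $X_C \subseteq \overline{\beta_H(Y)}$ (closure in $X_{H''}$).
   Context: A labeled graph $(H,L_H)$: finite directed graph (vertices $V_H$, edges $E_H$, source/terminal maps $s_H,t_H$) without sinks or sources, labeling $L_H:E_H\to A$, edge shift $X_H$. Right-resolving: distinct edges with the same source have distinct labels. Subset construction $(H'',L_{H''})$: vertices are non-empty subsets of $V_H$; for vertices $F,F'$ and $a\in A$ there is an edge from $F$ to $F'$ labeled $a$ when $F\subseteq\{s_H(e): L_H(e)=a\}$ and $F'=\{t_H(e): s_H(e)\in F, L_H(e)=a\}$; the graph is then trimmed by repeatedly removing sinks and sources. For $y\in Y$ ($L_H^{-1}(y)$ is finite), $\beta_H(y)\in X_{H''}$ is the bi-infinite path whose $i$-th edge is the edge labeled $y_i$ from $F_i$ to $F_{i+1}$, where $F_i=\{s_H(k_i): k\in L_H^{-1}(y)\}$. Components: a vertex is recurrent if there is a path from it to itself; recurrent vertices are equivalent if each reaches the other by a path; an equivalence class $C$ is a component and $X_C$ is the edge shift of the subgraph with vertex set $C$ and edges with both endpoints in $C$. $x\in X_{H''}$ is backward asymptotic to $X_C$ if there exist $u\in X_C$ and $N$ with $x_i=u_i$ for all $i\le N$. *)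

From HB Require Import structures.
From mathcomp Require Import all_boot all_order all_algebra.
From mathcomp Require Import boolp.
Set Implicit Arguments. Unset Strict Implicit. Unset Printing Implicit Defensive.
Import Order.TTheory GRing.Theory Num.Theory.
Local Open Scope ring_scope.

Section LabeledGraph.
Variables (V E A : finType) (s t : E -> V) (L : E -> A).

Definition no_sinks : Prop := forall v : V, exists e : E, s e = v.
Definition no_sources : Prop := forall v : V, exists e : E, t e = v.
Definition right_resolving : Prop :=
  forall e e' : E, s e = s e' -> L e = L e' -> e = e'.

Definition edge_shift (x : int -> E) : Prop :=
  forall i : int, t (x i) = s (x (i + 1)).

Definition in_Y (y : int -> A) : Prop :=
  exists x, edge_shift x /\ forall i, y i = L (x i).

Definition ssc_edge (F : {set V}) (a : A) (F' : {set V}) : bool :=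
  (F \subset [set s e | e : E & L e == a]) &&
  (F' == [set t e | e : E & (s e \in F) && (L e == a)]).

Definition ssc_step (W : {set {set V}}) : {set {set V}} :=
  [set F in W | [exists a, exists F' in W, ssc_edge F a F'] &&
                [exists a, exists F0 in W, ssc_edge F0 a F]].

(* vertices of H'': non-empty subsets, trimmed by repeatedly removing
   sinks and sources (the vertex set can only shrink #|{set V}| times,
   so this many rounds reach the fixed point) *)
Definition ssc_vertices : {set {set V}} :=
  iter #|{set V}| ssc_step [set F : {set V} | F != set0].

Definition ssc_edgeT := ({set V} * A * {set V})%type.
Definition ssc_src (e : ssc_edgeT) : {set V} := e.1.1.
Definition ssc_lab (e : ssc_edgeT) : A := e.1.2.
Definition ssc_tgt (e : ssc_edgeT) : {set V} := e.2.

Definition ssc_is_edge (e : ssc_edgeT) : bool :=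
  [&& ssc_src e \in ssc_vertices, ssc_tgt e \in ssc_vertices &
      ssc_edge (ssc_src e) (ssc_lab e) (ssc_tgt e)].

Definition X_H2 (x : int -> ssc_edgeT) : Prop :=
  (forall i, ssc_is_edge (x i)) /\
  (forall i : int, ssc_tgt (x i) = ssc_src (x (i + 1))).

Definition F_set (y : int -> A) (i : int) : {set V} :=
  [set v | `[< exists k : int -> E,
               edge_shift k /\ (forall j, L (k j) = y j) /\ s (k i) = v >]].

Definition beta (y : int -> A) : int -> ssc_edgeT :=
  fun i => (F_set y i, y i, F_set y (i + 1)).

Definition beta_image (z : int -> ssc_edgeT) : Prop :=
  exists y, in_Y y /\ forall i, z i = beta y i.

Definition ssc_adj : rel {set V} :=
  fun F F' => [exists a, ssc_is_edge (F, a, F')].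

Definition recurrent (F : {set V}) : bool :=
  [exists F', ssc_adj F F' && connect ssc_adj F' F].

Definition is_component (C : {set {set V}}) : Prop :=
  exists F, recurrent F /\
    C = [set F' | [&& recurrent F', connect ssc_adj F F' & connect ssc_adj F' F]].

Definition X_C (C : {set {set V}}) (x : int -> ssc_edgeT) : Prop :=
  (forall i, [&& ssc_is_edge (x i), ssc_src (x i) \in C & ssc_tgt (x i) \in C]) /\
  (forall i : int, ssc_tgt (x i) = ssc_src (x (i + 1))).

Definition backward_asymptotic (x : int -> ssc_edgeT) (C : {set {set V}}) : Prop :=
  exists u (N : int), X_C C u /\ forall i : int, i <= N -> x i = u i.

(* closure in X_{H''} for the product topology: every central block
   x_[-N, N] of x is matched by some element of S *)
Definition in_closure (S : (int -> ssc_edgeT) -> Prop) (x : int -> ssc_edgeT) : Prop :=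
  X_H2 x /\
  forall N : nat, exists z, S z /\
    forall i : int, - (N%:Z) <= i <= N%:Z -> z i = x i.

End LabeledGraph.

From Pilot Require Import Defs.
From HB Require Import structures.
From mathcomp Require Import all_boot all_order all_algebra.
From mathcomp Require Import boolp zify.
Set Implicit Arguments. Unset Strict Implicit. Unset Printing Implicit Defensive.
Import Order.TTheory GRing.Theory Num.Theory.
Local Open Scope ring_scope.

(* Write F_i(y) for the vertex of H'' visited by beta(y) at time i: the set of vertices carrying
   a y-labelled path both into the past and into the future.  As H is right-resolving, F_(i+1)(y)
   is the image of F_i(y) under the letter y_i, so beta(y') on a window is determined by F at the
   left end of the window and by the labels on it.  By compactness, the past condition at M only
   depends on a finite window y[M-n0, M).
   Choose M so far to the left that F_M(y) lies in C, and a word Z leading F_M(y) inside C to the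
   start of the u-window, along it, and back to F_M(y), ending with y[M-n0, M).  A power W of Z
   acts idempotently on sets of vertices.  Inserting W W into y at M gives y' whose F after the
   first copy of W is exactly F_M(y): the finite-window property bounds it from above after the
   second copy, idempotence carries the bound back, and F_M(y) loops under W.  Reading Z from
   there, beta(y') follows u on the window; a shift centres it. *)

Lemma iter_fact_idem (T : finType) (f : T -> T) (x : T) :
  iter #|T|`! f (iter #|T|`! f x) = iter #|T|`! f x.
Proof.
have [i lt_i_ord iter_ord] : exists2 i, (i < order f x)%N & iter (order f x) f x = iter i f x.
  exact/trajectP/looping_order.
set c := (order f x - i)%N.
have iter_period m : (i <= m)%N -> iter (c + m) f x = iter m f x.
  move=> le_im; have -> : (c + m = (m - i) + order f x)%N by rewrite /c; lia.
  by rewrite iterD iter_ord -iterD subnK.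
have iter_periods k m : (i <= m)%N -> iter (k * c + m) f x = iter m f x.
  move=> le_im; elim: k => // k IHk.
  by rewrite mulSn -addnA iter_period ?IHk // (leq_trans le_im) ?leq_addl.
have ord_le : (order f x <= #|T|)%N := max_card _.
have c_dvd : (c %| #|T|`!)%N by apply: dvdn_fact; apply/andP; split; rewrite /c; lia.
have T_le : (#|T| <= #|T|`!)%N.
  by apply: dvdn_leq (fact_gt0 _) _; apply: dvdn_fact; apply/andP; split; lia.
by rewrite -iterD -{1}(divnK c_dvd) iter_periods //; lia.
Qed.

Section Windows.
Variable T : Type.

Definition window (x : int -> T) (a : int) (n : nat) : seq T := mkseq (fun r => x (a + r%:Z)) n.

Lemma size_window x a n : size (window x a n) = n.
Proof. exact: size_mkseq. Qed.

Lemma window_eqP x z a b n :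
  window x a n = window z b n <-> forall r, (r < n)%N -> x (a + r%:Z) = z (b + r%:Z).
Proof.
split=> [eq_w r lt_rn | eq_xz].
  by have := congr1 (fun w => nth (x a) w r) eq_w; rewrite /= !nth_mkseq.
by apply/eq_in_map => r; rewrite mem_iota => /andP [_ /eq_xz].
Qed.

Lemma window_add x a m n :
  window x a (m + n) = window x a m ++ window x (a + m%:Z) n.
Proof.
rewrite /window /mkseq iotaD map_cat; congr (_ ++ _).
rewrite add0n -[m in iota m]addn0 iotaDl -map_comp.
by apply: eq_map => r /=; rewrite PoszD addrA.
Qed.

Lemma windowS x a n : window x a n.+1 = x a :: window x (a + 1) n.
Proof. by rewrite -add1n window_add /= addr0. Qed.

Lemma window_cat_split x a w1 w2 :
  window x a (size (w1 ++ w2)) = w1 ++ w2 ->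
  window x a (size w1) = w1 /\ window x (a + (size w1)%:Z) (size w2) = w2.
Proof.
rewrite size_cat window_add => eq_w.
have size_w1 := size_window x a (size w1).
split; [move: (congr1 (take (size w1)) eq_w) | move: (congr1 (drop (size w1)) eq_w)].
  by rewrite !take_size_cat.
by rewrite !drop_size_cat.
Qed.

Definition insert (x : int -> T) (M : int) (w : seq T) (i : int) : T :=
  if i < M then x i
  else if i < M + (size w)%:Z then nth (x i) w (absz (i - M)) else x (i - (size w)%:Z).

Lemma window_insert x M w : window (insert x M w) M (size w) = w.
Proof.
apply: (eq_from_nth (x0 := x M)); rewrite size_window // => r lt_rw.
rewrite nth_mkseq // /insert.
have -> : (M + r%:Z < M)%R = false by lia.
have -> : (M + r%:Z < M + (size w)%:Z)%R by lia.
by rewrite [M + _]addrC addrK; apply: set_nth_default.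
Qed.

Lemma insert_before x M w i : i < M -> insert x M w i = x i.
Proof. by rewrite /insert => ->. Qed.

Lemma insert_after x M w i : M <= i -> insert x M w (i + (size w)%:Z) = x i.
Proof.
move=> le_Mi; rewrite /insert.
have -> : (i + (size w)%:Z < M)%R = false by lia.
have -> : (i + (size w)%:Z < M + (size w)%:Z)%R = false by lia.
by rewrite addrK.
Qed.

Lemma insert_after_suffix x M n pre i :
  let w := pre ++ window x (M - n%:Z) n in
  M - n%:Z <= i -> insert x M w (i + (size w)%:Z) = x i.
Proof.
move=> w le_i; case: (ltrP i M) => [lt_iM | ]; last exact: insert_after.
have [_] := @window_cat_split (insert x M w) M pre _ (window_insert x M w).
rewrite size_window => /window_eqP /(_ (absz (i - (M - n%:Z))%R)) eq_r.
have -> : i + (size w)%:Z = M + (size pre)%:Z + (absz (i - (M - n%:Z))%R)%:Z.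
  by rewrite /w size_cat size_window; lia.
by rewrite eq_r; [congr x | ]; lia.
Qed.

End Windows.

Section SubsetConstruction.
Variables (V E A : finType) (s t : E -> V) (L : E -> A).
Hypothesis Hrr : right_resolving s L.

Local Notation F := (F_set s t L).
Local Notation beta := (beta s t L).

Definition delta (S : {set V}) (a : A) : {set V} :=
  [set t e | e : E & (s e \in S) && (L e == a)].

Definition deltaw (S : {set V}) (w : seq A) : {set V} := foldl delta S w.

Lemma deltaw_cat (S : {set V}) (w1 w2 : seq A) : deltaw S (w1 ++ w2) = deltaw (deltaw S w1) w2.
Proof. exact: foldl_cat. Qed.

Lemma deltaw_nseq (S : {set V}) (w : seq A) (q : nat) :
  deltaw S (flatten (nseq q w)) = iter q (deltaw^~ w) S.
Proof. by elim: q S => // q IHq S; rewrite iterSr -IHq -deltaw_cat. Qed.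

Lemma delta_sub (S1 S2 : {set V}) (a : A) : S1 \subset S2 -> delta S1 a \subset delta S2 a.
Proof.
move=> sub_S; apply: imsetS.
by apply/subsetP => e; rewrite !inE => /andP [/(subsetP sub_S) -> ->].
Qed.

Lemma deltaw_sub (S1 S2 : {set V}) (w : seq A) :
  S1 \subset S2 -> deltaw S1 w \subset deltaw S2 w.
Proof. by elim: w S1 S2 => // a w IHw S1 S2 sub_S; apply/IHw/delta_sub. Qed.

Lemma deltaw0 (w : seq A) : deltaw set0 w = set0.
Proof.
elim: w => // a w IHw; rewrite /= -[in RHS]IHw; congr deltaw.
by apply/setP => v; rewrite !inE; apply/imsetP => -[e]; rewrite !inE.
Qed.

Lemma mem_deltaw (S : {set V}) (w : seq A) (x : V) :
  x \in deltaw S w -> exists2 v, v \in S & x \in deltaw [set v] w.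
Proof.
elim: w S => [|a w IHw] S /=; first by exists x; rewrite ?inE.
move=> /IHw [v' /imsetP [e]]; rewrite inE => /andP [Se /eqP <-] ->{v'} x_w.
exists (s e) => //; apply: subsetP x_w; apply: deltaw_sub; rewrite sub1set.
by apply/imsetP; exists e; rewrite // !inE !eqxx.
Qed.

Lemma delta1 (e : E) : delta [set s e] (L e) = [set t e].
Proof.
apply/setP => v; rewrite inE; apply/imsetP/eqP => [[e'] | ->].
  by rewrite !inE => /andP [/eqP se /eqP le] ->; rewrite (Hrr se le).
by exists e; rewrite // !inE !eqxx.
Qed.

Lemma deltaw1 (v : V) (w : seq A) (x : V) : x \in deltaw [set v] w -> deltaw [set v] w = [set x].
Proof.
elim: w v => [|a w IHw] v /=; first by rewrite inE => /eqP ->.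
case: (set_0Vmem (delta [set v] a)) => [-> | [v' /imsetP [e]]].
  by rewrite deltaw0 inE.
rewrite !inE => /andP [/eqP <- /eqP <-] _; rewrite delta1; exact: IHw.
Qed.

Lemma deltaw_idem_fixed (W : seq A) (v x : V) :
  (forall S, deltaw (deltaw S W) W = deltaw S W) ->
  x \in deltaw [set v] W -> deltaw [set x] W = [set x].
Proof. by move=> idem /deltaw1 W_v; rewrite -W_v idem. Qed.

Definition loop_power (Z : seq A) : seq A := flatten (nseq #|{set V}|`! Z).

Lemma deltaw_loop_power_idem (Z : seq A) (S : {set V}) :
  deltaw (deltaw S (loop_power Z)) (loop_power Z) = deltaw S (loop_power Z).
Proof. by rewrite !deltaw_nseq iter_fact_idem. Qed.

Lemma deltaw_loop_power_fix (Z : seq A) (X : {set V}) :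
  deltaw X Z = X -> deltaw X (loop_power Z) = X.
Proof. by move=> fix_X; rewrite deltaw_nseq iter_fix. Qed.

Definition past (y : int -> A) (b : int) (v : V) : Prop :=
  exists k : int -> E, t (k (b - 1)) = v /\
    forall i, i < b -> L (k i) = y i /\ (i + 1 < b -> t (k i) = s (k (i + 1))).

Definition future (y : int -> A) (a : int) (v : V) : Prop :=
  exists k : int -> E, s (k a) = v /\
    forall i, a <= i -> L (k i) = y i /\ t (k i) = s (k (i + 1)).

Lemma mem_F_set (y : int -> A) (b : int) (v : V) :
  v \in F y b <-> past y b v /\ future y b v.
Proof.
rewrite inE; split=> [/asboolP [k [k_path [k_lab k_b]]] | ].
  by split; exists k; split=> //; rewrite k_path subrK.
move=> [[k1 [k1_b k1_past]] [k2 [k2_b k2_fut]]].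
apply/asboolP; exists (fun i => if i < b then k1 i else k2 i); split; last split.
- move=> i; case: (ltrP i b) => [lt_ib | le_bi].
    case: ifP => [lt_i1b | ge_i1b]; first exact: (k1_past i lt_ib).2.
    have -> : i + 1 = b by lia.
    by rewrite k2_b -k1_b; congr (t (k1 _)); lia.
  have -> : (i + 1 < b)%R = false by lia.
  exact: (k2_fut i le_bi).2.
- by move=> i; case: (ltrP i b) => [/k1_past | /k2_fut] [].
- by rewrite ltxx.
Qed.

Lemma F_set_in_Y (y : int -> A) (b : int) (v : V) : v \in F y b -> in_Y s t L y.
Proof.
by rewrite inE => /asboolP [k [k_path [k_lab _]]]; exists k; split=> // i; rewrite k_lab.
Qed.

Lemma F_set_shift (y : int -> A) (d i : int) : F (fun j => y (j + d)) i = F y (i + d).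
Proof.
apply/setP => v; rewrite !inE; apply/asboolP/asboolP => -[k [k_path [k_lab k_i]]].
  exists (fun j => k (j - d)); split; first by move=> j; rewrite k_path addrAC.
  by split=> [j|]; rewrite ?k_lab ?subrK ?addrK.
exists (fun j => k (j + d)); split; first by move=> j; rewrite k_path addrAC.
by split.
Qed.

Lemma F_set_step (y : int -> A) (i : int) : F y (i + 1) = delta (F y i) (y i).
Proof.
apply/setP => v; apply/idP/imsetP.
  rewrite inE => /asboolP [k [k_path [k_lab <-]]]; exists (k i); last by rewrite k_path.
  by rewrite !inE k_lab eqxx andbT; apply/asboolP; exists k.
move=> [e]; rewrite !inE => /andP [/asboolP [k [k_path [k_lab k_i]]] /eqP l_e] ->.
have -> : e = k i by apply: Hrr; [rewrite k_i | rewrite k_lab].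
by apply/asboolP; exists k; rewrite k_path.
Qed.

Lemma deltaw_window (X : int -> {set V}) (z : int -> A) :
  (forall i, X (i + 1) = delta (X i) (z i)) ->
  forall a n, deltaw (X a) (window z a n) = X (a + n%:Z).
Proof.
move=> X_step a n; elim: n a => [|n IHn] a; first by rewrite addr0.
by rewrite windowS /= -X_step IHn; congr X; lia.
Qed.

Lemma walk_deltaw (y : int -> A) (k : int -> E) :
  edge_shift s t k -> (forall i, L (k i) = y i) ->
  forall (S : {set V}) a n, s (k a) \in S -> s (k (a + n%:Z)) \in deltaw S (window y a n).
Proof.
move=> k_path k_lab S a n; elim: n S a => [|n IHn] S a k_a; first by rewrite addr0.
rewrite windowS /=; have -> : a + n.+1%:Z = a + 1 + n%:Z by lia.
by apply: IHn; apply/imsetP; exists (k a); rewrite ?k_path // inE k_a k_lab eqxx.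
Qed.

Lemma past_step (y : int -> A) (b : int) (e : E) :
  past y b (s e) -> L e = y b -> past y (b + 1) (t e).
Proof.
move=> [k [k_b k_past]] l_e.
exists (fun i => if i == b then e else k i); split; first by rewrite addrK eqxx.
move=> i lt_i; case: ifP => [/eqP -> | /eqP ne_ib]; first by rewrite ltxx l_e.
have lt_ib : i < b by lia.
have [-> k_chain] := k_past i lt_ib; split=> // _.
case: ifP => [/eqP e_i | /eqP ne]; last by apply: k_chain; lia.
by rewrite -k_b; congr (t (k _)); lia.
Qed.

Lemma future_step (y : int -> A) (a : int) (e : E) :
  future y (a + 1) (t e) -> L e = y a -> future y a (s e).
Proof.
move=> [k [k_a k_fut]] l_e.
exists (fun i => if i == a then e else k i); split; first by rewrite eqxx.
move=> i le_ai; case: ifP => [/eqP -> | /eqP ne_ia].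
  by split=> //; rewrite ifN ?k_a //; lia.
have /k_fut [-> ->] : a + 1 <= i by lia.
by split=> //; rewrite ifN //; lia.
Qed.

Lemma past_deltaw (y : int -> A) (S : {set V}) (a : int) (n : nat) :
  (forall v, v \in S -> past y a v) ->
  forall x, x \in deltaw S (window y a n) -> past y (a + n%:Z) x.
Proof.
elim: n S a => [|n IHn] S a S_past x; first by rewrite addr0; exact: S_past.
rewrite windowS /= => x_in; have -> : a + n.+1%:Z = a + 1 + n%:Z by lia.
apply: (IHn _ _ _ x x_in) => v' /imsetP [e]; rewrite inE => /andP [/S_past s_e /eqP l_e] ->.
exact: past_step.
Qed.

Lemma future_deltaw (y : int -> A) (S : {set V}) (a : int) (n : nat) (x : V) :
  x \in deltaw S (window y a n) -> future y (a + n%:Z) x ->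
  exists2 v, v \in S & future y a v.
Proof.
elim: n S a => [|n IHn] S a; first by rewrite addr0; exists x.
rewrite windowS /= => x_in x_fut.
have /(IHn _ _ x_in) [v' /imsetP [e]] : future y (a + 1 + n%:Z) x.
  by have -> : a + 1 + n%:Z = a + n.+1%:Z by lia.
rewrite inE => /andP [s_e /eqP l_e] ->{v'} t_fut.
by exists (s e) => //; apply: future_step.
Qed.

Lemma past_eq (y y' : int -> A) (b : int) (v : V) :
  (forall i, i < b -> y' i = y i) -> past y b v -> past y' b v.
Proof.
move=> eq_y [k [k_b k_past]]; exists k; split=> // i lt_i.
by rewrite eq_y //; exact: k_past.
Qed.

Lemma future_shift (y y' : int -> A) (a d : int) (v : V) :
  (forall i, a <= i -> y' (i + d) = y i) -> future y' (a + d) v <-> future y a v.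
Proof.
move=> eq_y; split=> -[k [k_a k_fut]].
  exists (fun i => k (i + d)); split=> // i le_ai.
  have /k_fut [k_lab k_chain] : a + d <= i + d by lia.
  by rewrite k_lab eq_y // k_chain addrAC.
exists (fun i => k (i - d)); split; first by rewrite addrK.
move=> i le_i; have /k_fut [k_lab k_chain] : a <= i - d by lia.
split; last by rewrite k_chain addrAC.
by rewrite k_lab -eq_y ?subrK //; lia.
Qed.

Fixpoint reach (y : int -> A) (b : int) (n : nat) : {set V} :=
  if n is n'.+1 then delta (reach y (b - 1) n') (y (b - 1)) else setT.

Lemma reach_shift (y y' : int -> A) (b d : int) (n : nat) :
  (forall i, b - n%:Z <= i < b -> y' (i + d) = y i) -> reach y' (b + d) n = reach y b n.
Proof.
elim: n b => // n IHn b eq_y /=; rewrite addrAC IHn => [|i /andP [le_i lt_i]].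
  by rewrite eq_y //; lia.
by apply: eq_y; lia.
Qed.

Lemma past_reach (y : int -> A) (b : int) (v : V) (n : nat) :
  past y b v -> v \in reach y b n.
Proof.
elim: n b v => [|n IHn] b v [k [k_b k_past]] /=; first by rewrite inE.
apply/imsetP; exists (k (b - 1)); last by rewrite k_b.
have /k_past [k_lab _] : b - 1 < b by lia.
rewrite inE k_lab eqxx andbT; apply: IHn; exists k; split.
  have /k_past [_ k_chain] : b - 1 - 1 < b by lia.
  by rewrite k_chain ?subrK //; lia.
move=> i lt_i; have /k_past [-> k_chain] : i < b by lia.
by split=> // lt_i1; apply: k_chain; lia.
Qed.

Lemma reach_succ_sub (y : int -> A) (b : int) (n : nat) :
  reach y b n.+1 \subset reach y b n.
Proof. by elim: n b => [|n IHn] b; [exact: subsetT | exact/delta_sub/IHn]. Qed.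

Lemma reach_mono (y : int -> A) (b : int) (m n : nat) :
  (n <= m)%N -> reach y b m \subset reach y b n.
Proof.
move/subnKC <-; elim: (m - n)%N => [|d IHd]; first by rewrite addn0.
by rewrite addnS (subset_trans (reach_succ_sub _ _ _)).
Qed.

Lemma reach_stable (y : int -> A) (b : int) :
  exists n0, forall n, reach y b n0 \subset reach y b n.
Proof.
pose P c := `[< exists n, #|reach y b n| = c >].
have exP : exists c, P c by exists #|reach y b 0|; apply/asboolP; exists 0%N.
case: (ex_minnP exP) => c /asboolP [n0 card_n0] min_c.
exists n0 => n; case: (leqP n0 n) => [le_n0n | /ltnW]; last exact: reach_mono.
suff /eqP -> : reach y b n == reach y b n0 by [].
by rewrite eqEcard reach_mono // card_n0 min_c //; apply/asboolP; exists n.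
Qed.

Lemma reach_pred (y : int -> A) (b : int) (v : V) :
  (forall n, v \in reach y b n) ->
  exists e, [/\ t e = v, L e = y (b - 1) & forall n, s e \in reach y (b - 1) n].
Proof.
move=> v_reach; have [n0 stable] := reach_stable y (b - 1).
have /imsetP [e] := v_reach n0.+1; rewrite inE => /andP [s_e /eqP l_e] ->.
by exists e; split=> // n; apply: (subsetP (stable n)).
Qed.

Lemma past_of_reach (y : int -> A) (b : int) (v : V) :
  (forall n, v \in reach y b n) -> past y b v.
Proof.
pose R j x := forall n, x \in reach y j n.
move=> v_reach; have [e0 _] := reach_pred v_reach.
have /choice [pre pre_spec] : forall jx : int * V, exists e, R jx.1 jx.2 ->
    [/\ t e = jx.2, L e = y (jx.1 - 1) & R (jx.1 - 1) (s e)].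
  move=> [j x]; case: (pselect (R j x)) => [/reach_pred [e e_spec] | not_R].
    by exists e.
  by exists e0 => /not_R.
pose vert := nat_rect (fun _ => V) v (fun m x => s (pre (b - m%:Z, x))).
have vert_R m : R (b - m%:Z) (vert m).
  elim: m => [|m IHm]; first by rewrite subr0.
  have [_ _] := pre_spec (_, _) IHm.
  by have -> : b - m.+1%:Z = b - m%:Z - 1 by lia.
pose e m := pre (b - m%:Z, vert m).
have e_spec m : [/\ t (e m) = vert m, L (e m) = y (b - m.+1%:Z) & s (e m) = vert m.+1].
  have [-> -> _] := pre_spec (_, _) (vert_R m); split=> //=; congr y; lia.
exists (fun i : int => e (absz (b - 1 - i)%R)); split.
  by rewrite subrr; have [] := e_spec 0%N.
move=> i lt_ib; have [t_e l_e _] := e_spec (absz (b - 1 - i)%R).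
split; first by rewrite l_e; congr y; lia.
move=> lt_i1b; have [_ _ s_e] := e_spec (absz (b - 1 - (i + 1))%R).
by rewrite t_e s_e; congr vert; lia.
Qed.

Lemma F_set_window (y : int -> A) (b : int) :
  exists n0 : nat, forall (y' : int -> A) (d : int),
    (forall i, b - n0%:Z <= i -> y' (i + d) = y i) -> {subset F y' (b + d) <= F y b}.
Proof.
have [n0 stable] := reach_stable y b.
exists n0 => y' d eq_y v /mem_F_set [v_past v_fut]; apply/mem_F_set; split.
  apply: past_of_reach => n; apply: (subsetP (stable n)).
  have <- : reach y' (b + d) n0 = reach y b n0.
    by apply: reach_shift => i /andP [le_i _]; exact: eq_y.
  exact: past_reach.
have eq_fut i : b <= i -> y' (i + d) = y i by move=> le_bi; apply: eq_y; lia.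
exact: (future_shift _ eq_fut).1 v_fut.
Qed.

Lemma F_set_insert_loop (y : int -> A) (M : int) (n0 : nat) (pre W : seq A) :
  (forall (y' : int -> A) (d : int),
    (forall i, M - n0%:Z <= i -> y' (i + d) = y i) -> {subset F y' (M + d) <= F y M}) ->
  W = pre ++ window y (M - n0%:Z) n0 ->
  deltaw (F y M) W = F y M ->
  (forall S, deltaw (deltaw S W) W = deltaw S W) ->
  F (insert y M (W ++ W)) (M + (size W)%:Z) = F y M.
Proof.
move=> F_win W_tail W_fix W_idem.
set y' := insert y M (W ++ W); set p := size W.
have [win1 win2] := window_cat_split (window_insert y M (W ++ W)).
have size_WW : (size (W ++ W))%:Z = p%:Z + p%:Z by rewrite size_cat PoszD.
have y'_tail i : M - n0%:Z <= i -> y' (i + (p%:Z + p%:Z)) = y i.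
  have WW : W ++ W = (W ++ pre) ++ window y (M - n0%:Z) n0 by rewrite -catA -W_tail.
  by rewrite /y' -size_WW WW; apply: insert_after_suffix.
apply/setP => v; apply/idP/idP => v_in.
  move: (v_in); rewrite inE => /asboolP [k [k_path [k_lab k_v]]].
  have v_W : v \in deltaw [set s (k M)] W.
    by rewrite -win1 -k_v; apply: walk_deltaw; rewrite ?inE.
  have w_W : s (k (M + p%:Z + p%:Z)) \in deltaw [set v] W.
    by rewrite -win2 -k_v; apply: walk_deltaw; rewrite ?inE.
  (* v is reached by the idempotent word W, hence fixed by it *)
  move: w_W; rewrite (deltaw_idem_fixed W_idem v_W) inE => /eqP <-.
  apply: (F_win y' (p%:Z + p%:Z) y'_tail); rewrite addrA inE.
  by apply/asboolP; exists k.
have v_loop : v \in deltaw [set v] W.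
  move: v_in; rewrite -W_fix => /mem_deltaw [g _ v_g].
  by rewrite (deltaw_idem_fixed W_idem v_g) inE.
case/mem_F_set: v_in => v_past v_fut; apply/mem_F_set; split.
  apply: (@past_deltaw y' [set v] M p) => [_ /set1P -> | ]; last by rewrite win1.
  by apply: past_eq v_past => i; apply: insert_before.
have v_fut2 : future y' (M + p%:Z + p%:Z) v.
  have y'_after i : M <= i -> y' (i + (p%:Z + p%:Z)) = y i by move=> ?; apply: y'_tail; lia.
  by rewrite -addrA; apply/(future_shift _ y'_after).
have v_loop2 : v \in deltaw [set v] (window y' (M + p%:Z) p) by rewrite win2.
by have [_ /set1P ->] := future_deltaw v_loop2 v_fut2.
Qed.

Lemma realize_loop_word (y : int -> A) (M : int) (n0 : nat) (pre : seq A) :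
  (forall (y' : int -> A) (d : int),
    (forall i, M - n0%:Z <= i -> y' (i + d) = y i) -> {subset F y' (M + d) <= F y M}) ->
  let Z := pre ++ window y (M - n0%:Z) n0 in
  deltaw (F y M) Z = F y M ->
  exists (y' : int -> A) (b : int), F y' b = F y M /\ window y' b (size Z) = Z.
Proof.
move=> F_win Z Z_fix; set W := loop_power Z.
set q := (#|{set V}|`!).-1.
have W_head : W = Z ++ flatten (nseq q Z) by rewrite /W /loop_power -(prednK (fact_gt0 _)).
have W_tail : W = (flatten (nseq q Z) ++ pre) ++ window y (M - n0%:Z) n0.
  by rewrite /W /loop_power -(prednK (fact_gt0 _)) -addn1 nseqD flatten_cat /= cats0 -catA.
exists (insert y M (W ++ W)), (M + (size W)%:Z); split.
  apply: F_set_insert_loop F_win W_tail _ (deltaw_loop_power_idem Z).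
  exact: deltaw_loop_power_fix.
have [_ win2] := window_cat_split (window_insert y M (W ++ W)).
by have := @window_cat_split _ _ _ Z (flatten (nseq q Z)); rewrite -W_head => /(_ _ _ win2) [].
Qed.

Lemma X_H2_src_step (u : int -> ssc_edgeT V A) :
  X_H2 s t L u -> forall i, ssc_src (u (i + 1)) = delta (ssc_src (u i)) (ssc_lab (u i)).
Proof.
by move=> [u_edge u_chain] i; rewrite -u_chain; case/and3P: (u_edge i) => _ _ /andP [_ /eqP].
Qed.

Lemma beta_shift (y : int -> A) (d i : int) : beta (fun j => y (j + d)) i = beta y (i + d).
Proof. by rewrite /Defs.beta !F_set_shift [i + 1 + d]addrAC. Qed.

Lemma beta_follows (y : int -> A) (u : int -> ssc_edgeT V A) (b a : int) (m : nat) :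
  X_H2 s t L u -> F y b = ssc_src (u a) ->
  (forall r, (r < m)%N -> y (b + r%:Z) = ssc_lab (u (a + r%:Z))) ->
  forall r, (r < m)%N -> beta y (b + r%:Z) = u (a + r%:Z).
Proof.
move=> u_H2 F_b lab_u.
have F_r r : (r <= m)%N -> F y (b + r%:Z) = ssc_src (u (a + r%:Z)).
  move=> le_rm; rewrite -(deltaw_window (F_set_step y)) -(deltaw_window (X_H2_src_step u_H2)) F_b.
  by congr deltaw; apply/window_eqP => r' lt_r'; apply: lab_u; apply: leq_trans le_rm.
move=> r lt_rm; rewrite /Defs.beta F_r ?(ltnW lt_rm) // lab_u //.
have -> : b + r%:Z + 1 = b + r.+1%:Z by lia.
rewrite F_r //; have -> : a + r.+1%:Z = a + r%:Z + 1 by lia.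
by case: u_H2 => _ <-; case: (u _) => [[]].
Qed.

Lemma connect_deltaw (X Y : {set V}) : connect (ssc_adj s t L) X Y -> exists w, deltaw X w = Y.
Proof.
case/connectP => p; elim: p X => [|X' p IHp] X /=; first by move=> _ ->; exists [::].
case/andP => /existsP [a /and3P [_ _ /andP [_ /= /eqP ->]]] /IHp IH /IH [w <-].
by exists (a :: w).
Qed.

Lemma component_connect (C : {set {set V}}) (X Y : {set V}) :
  is_component s t L C -> X \in C -> Y \in C -> connect (ssc_adj s t L) X Y.
Proof.
case=> F0 [_ ->]; rewrite !inE => /and3P [_ _ X_F0] /and3P [_ F0_Y _].
exact: connect_trans X_F0 F0_Y.
Qed.

Lemma X_C_X_H2 (C : {set {set V}}) (u : int -> ssc_edgeT V A) : X_C s t L C u -> X_H2 s t L u.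
Proof. by case=> u_edge u_chain; split=> // i; case/and3P: (u_edge i). Qed.

Lemma component_approx (C : {set {set V}}) (y : int -> A) (N0 : int)
    (u : int -> ssc_edgeT V A) (n : nat) :
  is_component s t L C -> in_Y s t L y -> (forall i, i <= N0 -> F y i \in C) ->
  X_C s t L C u ->
  exists y' : int -> A, in_Y s t L y' /\ forall i, - n%:Z <= i <= n%:Z -> beta y' i = u i.
Proof.
move=> HC [x [x_path x_lab]] y_C u_C.
have u_H2 := X_C_X_H2 u_C.
have src_C i : ssc_src (u i) \in C by case: u_C => u_edge _; case/and3P: (u_edge i).
have [n0 F_win] := F_set_window y N0.
pose m := (n + n).+1.
pose Uw := window (fun i => ssc_lab (u i)) (- n%:Z) m.
have [w1 w1_G] := connect_deltaw (component_connect HC (y_C N0 (lexx _)) (src_C (- n%:Z))).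
have le_N0 : N0 - n0%:Z <= N0 by lia.
have [w2 w2_F] := connect_deltaw (component_connect HC (src_C (- n%:Z + m%:Z)) (y_C _ le_N0)).
have Z_fix : deltaw (F y N0) ((w1 ++ Uw ++ w2) ++ window y (N0 - n0%:Z) n0) = F y N0.
  rewrite !deltaw_cat w1_G (deltaw_window (X_H2_src_step u_H2)) w2_F.
  by rewrite (deltaw_window (F_set_step y)) subrK.
have [y' [b [F_b win_b]]] := realize_loop_word F_win Z_fix.
have [win_pre _] := window_cat_split win_b.
have [win_w1 /window_cat_split [win_Uw _]] := window_cat_split win_pre.
set c := b + (size w1)%:Z in win_Uw.
have F_c : F y' c = ssc_src (u (- n%:Z)).
  by rewrite -w1_G -F_b -win_w1 (deltaw_window (F_set_step y')).
have lab_c r : (r < m)%N -> y' (c + r%:Z) = ssc_lab (u (- n%:Z + r%:Z)).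
  by move: win_Uw; rewrite size_window /Uw => /window_eqP; apply.
exists (fun i => y' (i + (c + n%:Z))); split.
  apply: (@F_set_in_Y _ (b - (c + n%:Z)) (s (x N0))).
  rewrite F_set_shift subrK F_b inE; apply/asboolP; exists x.
  by split=> //; split=> // j; rewrite x_lab.
move=> i /andP [le_ni le_in].
have [r lt_rm ->] : exists2 r, (r < m)%N & i = - n%:Z + r%:Z.
  by exists (absz (i + n%:Z)); rewrite /m; lia.
rewrite beta_shift; have -> : - n%:Z + r%:Z + (c + n%:Z) = c + r%:Z by lia.
exact: beta_follows u_H2 F_c lab_c r lt_rm.
Qed.

End SubsetConstruction.

Theorem lemma4p4 (V E A : finType) (s t : E -> V) (L : E -> A)
  (Hsinks : no_sinks s) (Hsources : no_sources t)
  (Hrr : right_resolving s L)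
  (C : {set {set V}}) (HC : is_component s t L C)
  (y : int -> A) (Hy : in_Y s t L y)
  (Hasym : backward_asymptotic s t L (beta s t L y) C) :
  forall u : int -> ssc_edgeT V A,
    X_C s t L C u -> in_closure s t L (beta_image s t L) u.
Proof.
move=> u u_C; split=> [|n]; first exact: X_C_X_H2 u_C.
have [u' [N0 [[u'_edge _] beta_u']]] := Hasym.
have y_C i : i <= N0 -> F_set s t L y i \in C.
  by move=> le_i; case/and3P: (u'_edge i); rewrite -beta_u'.
have [y' [y'_Y y'_u]] := component_approx Hrr n HC Hy y_C u_C.
by exists (beta s t L y'); split; [exists y' | move=> i /y'_u].
Qed.
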